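(* Let $q$ be a prime power, let $G$ be an abelian group with $|G|=(q+1)(q^2+1)$, and let $D$ be a normalized difference set in $G$ with parameters $\left((q+1)(q^2+1),\,q^2+q+1,\,q+1\right)$. Then: (1) there is a unique subgroup $K$ of order $q^2+1$ in $G$; (2) for exactly one coset $Kx$ of $K$ in $G$ we have $|D\cap Kx|=1$, and $|D\cap Kx|=q+1$ for each of the other $q$ cosets of $K$.
   Context: A $(v,k,\lambda)$-difference set in an abelian group $G$ of order $v$ is a $k$-subset $D$ such that every non-identity element of $G$ is of the form $d_1d_2^{-1}$ with $d_1,d_2\in D$ in exactly $\lambda$ ways. It is normalized if $\prod_{d\in D}d=1$. *)

From mathcomp Require Import all_boot all_fingroup.
Set Implicit Arguments. Unset Strict Implicit. Unset Printing Implicit Defensive.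
Local Open Scope group_scope.

Definition prime_power (q : nat) : Prop :=
  exists p n : nat, prime p /\ (0 < n)%N /\ q = (p ^ n)%N.

Definition difference_set (gT : finGroupType) (G : {group gT}) (D : {set gT})
    (v k lam : nat) : Prop :=
  [/\ #|G| = v, D \subset G, #|D| = k &
      forall g, g \in G -> g != 1 ->
        #|[set p in setX D D | p.1 * p.2^-1 == g]| = lam].

Definition normalized (gT : finGroupType) (D : {set gT}) : Prop :=
  \prod_(d in D) d = 1.

(* Contract D along a subgroup U of G: the numbers a(c) = |D :&: c| for cosets c
   satisfy sum_c a(c) a(z^-1 c) = lam |U| + [z = 1] (k - lam).  If t |G : U| = (q+1)^2
   and G/U has exponent dividing q + 1, the integer function a - t on G/U therefore
   has autocorrelation q^2 [z = 1].  As q = p^e is -1 modulo the exponent, reducing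
   mod p and computing in the group algebra over F_p (where A^q is the image of A
   under inversion, so A^(q+1) = A A^* = 0 while A^(q^2) = A) shows that a function
   whose autocorrelation is divisible by p is itself divisible by p; descending, a - t
   vanishes off a single coset, where its sum forces the value -q.  For U = K of
   order q^2 + 1 this is the claimed pattern with t = q + 1.  Two distinct subgroups
   of order q^2 + 1 would meet in a U with t = (q+1)/w for some w >= 2, and then
   q <= a + q = t is impossible. *)

From mathcomp Require Import all_boot all_fingroup all_algebra all_solvable all_field.
From mathcomp Require Import mxrepresentation zify ring.
Set Implicit Arguments. Unset Strict Implicit. Unset Printing Implicit Defensive.
Import GRing.Theory Num.Theory.
Local Open Scope ring_scope.

Definition autocorr (R : pzSemiRingType) (gT : finGroupType) (H : {set gT})
    (f : gT -> R) (z : gT) : R :=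
  \sum_(h in H) f h * f (z^-1 * h)%g.

Lemma pFrobenius_sum_comm (R : nzRingType) (p : nat) (I : eqType) (r : seq I)
    (X : I -> R) :
  p \in [pchar R] -> {in r &, forall i j, GRing.comm (X i) (X j)} ->
  (\sum_(i <- r) X i) ^+ p = \sum_(i <- r) X i ^+ p.
Proof.
move=> pR; elim: r => [|i r IHr] cX.
  by rewrite !big_nil expr0n; have := pcharf_prime pR; case: (p).
have cXr : {in r &, forall j k, GRing.comm (X j) (X k)}.
  by move=> j k jr kr; apply: cX; rewrite inE ?jr ?kr orbT.
rewrite !big_cons -IHr // -!(pFrobenius_autE pR) pFrobenius_autD_comm //.
by rewrite big_seq; apply: commr_sum => j jr; apply: cX; rewrite inE ?jr ?eqxx ?orbT.
Qed.

Section GroupAlgebraFrobenius.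

Variables (p : nat) (gT : finGroupType) (H : {group gT}).
Hypotheses (p_pr : prime p) (abH : abelian H).
Variable c : gT -> 'F_p.

Variable e : nat.
Hypotheses (e_gt0 : (0 < e)%N) (expH : {in H, forall h, h ^+ (p ^ e).+1 = 1}%g).
Hypothesis autocorr0 : {in H, forall z, autocorr H c z = 0}.

Section Representation.

Variables (d : nat) (rG : mx_representation 'F_p H d.+1).

Definition gring_sum (f : gT -> gT) := \sum_(h in H) c h *: rG (f h).

Lemma gring_sum_expp (f : gT -> gT) : {in H, forall h, f h \in H} ->
  gring_sum f ^+ p = gring_sum (fun h => f h ^+ p)%g.
Proof.
move=> fH; rewrite /gring_sum -big_enum pFrobenius_sum_comm; first last.
- move=> i j; rewrite !mem_enum => iH jH; rewrite /GRing.comm.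
  rewrite -!scalerAl -!scalerAr -!mulmxE -!repr_mxM ?fH //.
  by rewrite (centsP abH (f i)) ?fH // scalerA mulrC -scalerA.
- by rewrite pchar_lalg pchar_Fp.
rewrite big_enum; apply: eq_bigr => h hH.
have Fp_expp (x : 'F_p) : x ^+ p = x by rewrite -{2}(expf_card x) card_Fp.
by rewrite exprZn -repr_mxX ?fH // Fp_expp.
Qed.

Lemma gring_sum_exp_ppow m :
  gring_sum id ^+ (p ^ m) = gring_sum (fun h => h ^+ (p ^ m))%g.
Proof.
elim: m => [|m IHm].
  by rewrite expr1; apply: eq_bigr => h _; rewrite expg1.
rewrite expnSr exprM IHm gring_sum_expp => [|h hH]; last by rewrite groupX.
by apply: eq_bigr => h _; rewrite expgM.
Qed.

Lemma gring_sum_mul_inv :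
  gring_sum id * gring_sum (fun h => h^-1)%g = \sum_(z in H) autocorr H c z *: rG z.
Proof.
rewrite /gring_sum mulr_suml.
have -> : \sum_(h in H) (c h *: rG h) * (\sum_(k in H) c k *: rG (k^-1)%g) =
    \sum_(h in H) \sum_(z in H) (c h * c (z^-1 * h)%g) *: rG z.
  apply: eq_bigr => h hH; rewrite mulr_sumr.
  have inj_h : injective (fun z => z^-1 * h)%g by move=> x y /mulIg /invg_inj.
  rewrite (reindex_inj inj_h); apply: eq_big => [z | z zH] /=.
    by rewrite groupMr ?groupV.
  rewrite -scalerAl -scalerAr -mulmxE -repr_mxM ?groupM ?groupV //.
  by rewrite invMg invgK mulgA mulgV mul1g scalerA.
by rewrite exchange_big; apply: eq_bigr => z _; rewrite scaler_suml.
Qed.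

Lemma gring_sum_eq0 : gring_sum id = 0.
Proof.
set q := (p ^ e)%N; set A := gring_sum id.
have expqH : {in H, forall h, h ^+ q = h^-1}%g.
  by move=> h /expH; rewrite expgSr => /(canRL (mulgK h)); rewrite mul1g.
have A_q : A ^+ q = gring_sum (fun h => h^-1)%g.
  by rewrite gring_sum_exp_ppow; apply: eq_bigr => h /expqH->.
have A_qq : A ^+ (q * q) = A.
  rewrite -expnD gring_sum_exp_ppow; apply: eq_bigr => h hH.
  by rewrite expnD expgM !expqH ?groupV // invgK.
have A_q1 : A ^+ q.+1 = 0.
  by rewrite exprS A_q gring_sum_mul_inv big1 // => z /autocorr0->; rewrite scale0r.
have q_gt1 : (1 < q)%N by rewrite -(expn0 p) ltn_exp2l ?prime_gt1.
have q1_le_qq : (q.+1 <= q * q)%N by nia.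
by rewrite -A_qq -(subnKC q1_le_qq) exprD A_q1 mul0r.
Qed.

End Representation.

Lemma Fp_autocorr0_coef_eq0 : {in H, forall h, c h = 0}.
Proof.
(* Size 0 is trivial; the regular representation then separates coefficients. *)
have sum_eq0 d (rG : mx_representation 'F_p H d) : \sum_(h in H) c h *: rG h = 0.
  by case: d rG => [|d] rG; [rewrite flatmx0 | apply: gring_sum_eq0].
move=> h hH; have := congr1 (gring_proj h) (sum_eq0 _ (regular_repr 'F_p H)).
rewrite linear_sum (bigD1 h) //= big1 => [|k /andP[kH kh]]; last first.
  by rewrite linearZ_LR /= gring_projE // eq_sym (negbTE kh) scaler0.
rewrite linearZ_LR /= gring_projE // eqxx addr0 linear0.
by move/matrixP/(_ 0 0); rewrite !mxE mulr1.
Qed.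

End GroupAlgebraFrobenius.

Lemma sum_sqr_eq1 (I : finType) (A : {pred I}) (f : I -> int) :
  \sum_(i in A) f i ^+ 2 = 1 ->
  exists2 x, x \in A & {in A, forall i, i != x -> f i = 0} /\ f x ^+ 2 = 1.
Proof.
move=> sum1; have [x /andP[xA fx_neq0] | f0] := pickP [pred i in A | f i != 0].
  have sqr_x_ge1 : 1 <= f x ^+ 2 by move: fx_neq0; rewrite expr2; lia.
  move: sum1; rewrite (bigD1 x) //=; set rest := \sum_(i in _ | _) _ => sum1.
  have rest_ge0 : 0 <= rest by apply: sumr_ge0 => i _; apply: sqr_ge0.
  have [rest0 sqr_x1] : rest = 0 /\ f x ^+ 2 = 1 by lia.
  exists x => //; split=> // i iA ix.
  have /psumr_eq0P/(_ rest0 i) : forall i, (i \in A) && (i != x) -> 0 <= f i ^+ 2.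
    by move=> j _; apply: sqr_ge0.
  by rewrite iA ix => /(_ isT) /eqP; rewrite sqrf_eq0 => /eqP.
move: sum1; rewrite big1 // => i iA.
by have := f0 i; rewrite /= iA => /negbFE/eqP->; rewrite expr0n.
Qed.

Section IntegerAutocorrelation.

Variables (p : nat) (gT : finGroupType) (H : {group gT}) (e : nat).
Hypotheses (p_pr : prime p) (e_gt0 : (0 < e)%N) (abH : abelian H).
Hypothesis expH : {in H, forall h, h ^+ (p ^ e).+1 = 1}%g.

Lemma dvdz_autocorr (f : gT -> int) :
  {in H, forall z, (p %| autocorr H f z)%Z} -> {in H, forall h, (p %| f h)%Z}.
Proof.
move=> p_dvd h hH; have pFp := pchar_Fp p_pr.
rewrite (dvdz_pcharf pFp); apply/eqP.
apply: (Fp_autocorr0_coef_eq0 p_pr abH (c := fun x => (f x)%:~R) e_gt0 expH) => // z zH.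
move: (p_dvd z zH); rewrite (dvdz_pcharf pFp) => /eqP <-.
rewrite /autocorr (big_morph (fun x : int => x%:~R : 'F_p) (@intrD _) (mulr0z 1)).
by apply: eq_bigr => k _; rewrite intrM.
Qed.

Lemma autocorr_delta_support (j : nat) (f : gT -> int) :
    {in H, forall z, autocorr H f z = if z == 1%g then (p ^ (2 * j))%:Z else 0} ->
  exists2 x, x \in H &
    {in H, forall h, h != x -> f h = 0} /\ f x ^+ 2 = (p ^ (2 * j))%:Z.
Proof.
elim: j f => [|j IHj] f autocorr_f.
  apply: sum_sqr_eq1; have := autocorr_f 1%g (group1 H); rewrite eqxx /autocorr.
  by under eq_bigr => h _ do rewrite invg1 mul1g -expr2.
have p_dvd_f : {in H, forall h, (p %| f h)%Z}.
  apply: dvdz_autocorr => z zH; rewrite autocorr_f //; case: ifP => _.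
    by rewrite dvdzE /= dvdn_exp // muln_gt0.
  exact: dvdz0.
pose g h := (f h %/ p)%Z.
have f_g : {in H, forall h, f h = g h * p} by move=> h hH; rewrite divzK ?p_dvd_f.
have p2_neq0 : (p%:Z) ^+ 2 != 0 by rewrite expf_eq0 /= eqz_nat -lt0n prime_gt0.
have expp2 i : (p ^ (2 * i.+1))%:Z = (p ^ (2 * i))%:Z * (p%:Z) ^+ 2.
  by rewrite -!natz -natrX -natrM -expnD; congr (_ ^ _)%:R; lia.
have [x xH [g0 gx2]] : exists2 x, x \in H &
    {in H, forall h, h != x -> g h = 0} /\ g x ^+ 2 = (p ^ (2 * j))%:Z.
  apply: IHj => z zH; apply: (mulIf p2_neq0).
  have -> : autocorr H g z * p%:Z ^+ 2 = autocorr H f z.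
    rewrite /autocorr mulr_suml; apply: eq_bigr => h hH.
    by rewrite !f_g ?groupM ?groupV //; ring.
  by rewrite autocorr_f // expp2; case: ifP => _; rewrite ?mul0r.
exists x => //; split=> [h hH hx | ]; first by rewrite f_g // g0 // mul0r.
by rewrite f_g // exprMn gx2 expp2.
Qed.

End IntegerAutocorrelation.

Local Close Scope ring_scope.
Local Open Scope group_scope.

Lemma abelian_exists_subgroup_of_order (gT : finGroupType) (G : {group gT}) d :
  abelian G -> d %| #|G| -> exists K : {group gT}, K \subset G /\ #|K| = d.
Proof.
elim/ltn_ind: d gT G => d IHd gT G abG d_dvd.
have [d_le1 | d_gt1] := leqP d 1.
  case: d d_le1 d_dvd {IHd} => [_ | [_ _ | //]].
    by rewrite dvd0n; case: #|G| (cardG_gt0 G).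
  by exists 1%G; rewrite sub1G cards1.
have r_pr := pdiv_prime d_gt1; set r := pdiv d in r_pr.
have [z zG oz] := Cauchy r_pr (dvdn_trans (pdiv_dvd d) d_dvd).
have nsZG : <[z]> <| G by rewrite -sub_abelian_normal ?cycle_subG.
have nZG := normal_norm nsZG.
have r_d : (d %/ r * r)%N = d by rewrite divnK ?pdiv_dvd.
have dr_dvd : d %/ r %| #|G / <[z]>|.
  rewrite card_quotient // -(dvdn_pmul2r (prime_gt0 r_pr)) r_d.
  by rewrite -oz mulnC [#[z]]/order Lagrange ?cycle_subG.
have [|Kbar [sKbar card_Kbar]] := IHd _ _ _ _ (quotient_abelian _ abG) dr_dvd.
  by rewrite ltn_Pdiv ?prime_gt1 // ltnW.
case/inv_quotientS: sKbar => // K defKbar sZK sKG.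
exists K; split=> //; rewrite -(Lagrange sZK) -card_quotient.
  by rewrite defKbar in card_Kbar; rewrite card_Kbar mulnC -[in RHS]r_d; congr (_ * _)%N.
exact: subset_trans sKG nZG.
Qed.

Lemma abelian_expg_indexg (gT : finGroupType) (G K : {group gT}) :
  abelian G -> K \subset G -> {in G, forall g, g ^+ #|G : K| \in K}.
Proof.
move=> abG sKG g gG; have nKg := subsetP (sub_abelian_norm abG sKG) g gG.
apply: coset_idr; first by rewrite groupX.
by rewrite morphX // -card_quotient ?sub_abelian_norm // expg_cardG ?mem_quotient.
Qed.

Section DifferenceSetContraction.

Variables (gT : finGroupType) (G U : {group gT}) (D : {set gT}) (v k lam : nat).
Hypotheses (nsUG : U <| G) (dsD : difference_set G D v k lam).

Let sDG : D \subset G. Proof. by case: dsD. Qed.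

Lemma card_diff_pairs g : g \in G ->
  (\sum_(d1 in D) \sum_(d2 in D) (d1 * d2^-1 == g)%g)%N = if g == 1 then k else lam.
Proof.
have card_pairs : #|[set x in setX D D | x.1 * x.2^-1 == g]| =
    (\sum_(d1 in D) \sum_(d2 in D) (d1 * d2^-1 == g)%g)%N.
  rewrite -sum1_card pair_big_dep /= big_mkcond [RHS]big_mkcond.
  apply: eq_bigr => -[d1 d2] _; rewrite !inE /=.
  by case: (d1 \in D) (d2 \in D) (_ == g) => [] [] [].
case: dsD => _ _ cardD diffD gG; have [->|g1] := eqVneq g 1; last first.
  by rewrite -card_pairs diffD.
rewrite -cardD -sum1_card; apply: eq_bigr => d1 d1D.
rewrite (bigD1 d1) //= mulgV eqxx big1 // => d2 /andP[_ d21].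
by rewrite -eq_mulgV1 eq_sym (negbTE d21).
Qed.

Let nUg g : g \in G -> g \in 'N(U). Proof. exact: subsetP (normal_norm nsUG) g. Qed.
Let cosetD d : d \in D -> coset U d \in G / U.
Proof. by move=> dD; rewrite mem_quotient // (subsetP sDG). Qed.

Definition coset_count (c : coset_of U) : nat := \sum_(d in D) (coset U d == c).

Lemma card_meet_rcoset x : x \in G -> #|D :&: U :* x| = coset_count (coset U x).
Proof.
move=> xG; rewrite -sum1_card big_mkcond [RHS]big_mkcond /=.
apply: eq_bigr => d _; rewrite inE; case dD: (d \in D) => //=.
have /nUg dN := subsetP sDG d dD.
by case: (rcoset_kercosetP dN (nUg xG)) => [->|]; [rewrite eqxx | case: eqP].
Qed.

Lemma sum_coset_count : (\sum_(c in G / U) coset_count c)%N = #|D|.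
Proof.
rewrite exchange_big /= -sum1_card; apply: eq_bigr => d dD.
rewrite (bigD1 (coset U d)) ?cosetD //= eqxx big1 // => c /andP[_ dc].
by rewrite eq_sym (negbTE dc).
Qed.

Lemma card_coset_fiber z : z \in G / U -> #|[set g in G | coset U g == z]| = #|U|.
Proof.
case/morphimP=> x xN xG ->; rewrite -(card_rcoset U x); apply: eq_card => g.
rewrite !inE; apply/andP/idP => [[gG /eqP] | gUx].
  by move=> gx; apply/rcoset_kercosetP; rewrite ?nUg.
have gG : g \in G.
  by case/rcosetP: gUx => u uU ->; rewrite groupMr // (subsetP (normal_sub nsUG)).
by split=> //; apply/eqP/rcoset_kercosetP; rewrite ?nUg.
Qed.

Lemma coset_count_autocorr_pairs z :
  (\sum_(c in G / U) coset_count c * coset_count (z^-1 * c))%N =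
  (\sum_(d1 in D) \sum_(d2 in D) (coset U (d1 * d2^-1) == z))%N.
Proof.
rewrite /coset_count; under eq_bigr => c _ do rewrite big_distrl /=.
rewrite exchange_big; apply: eq_bigr => d1 d1D.
under eq_bigr => c _ do rewrite big_distrr /=.
rewrite exchange_big; apply: eq_bigr => d2 d2D.
rewrite (bigD1 (coset U d1)) ?cosetD //= eqxx mul1n big1 ?addn0 => [|c /andP[_ d1c]].
  rewrite morphM ?morphV ?groupV ?nUg ?(subsetP sDG) // /=.
  by congr nat_of_bool; apply/eqP/eqP => [->|<-]; rewrite invMg invgK ?mulKVg ?mulgKV.
by rewrite eq_sym (negbTE d1c).
Qed.

Lemma coset_count_autocorr z : z \in G / U ->
  (\sum_(c in G / U) coset_count c * coset_count (z^-1 * c))%N =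
  if z == 1 then (k + lam * #|U|.-1)%N else (lam * #|U|)%N.
Proof.
move=> zGU; rewrite coset_count_autocorr_pairs.
transitivity (\sum_(g in G | coset U g == z)
               \sum_(d1 in D) \sum_(d2 in D) (d1 * d2^-1 == g)%g)%N.
  rewrite [RHS]exchange_big; apply: eq_bigr => d1 d1D.
  rewrite [RHS]exchange_big; apply: eq_bigr => d2 d2D.
  have dG : d1 * d2^-1 \in G by rewrite groupM ?groupV ?(subsetP sDG).
  have [dz | dz] := eqVneq (coset U (d1 * d2^-1)) z.
    rewrite (bigD1 (d1 * d2^-1)) /= ?dG ?dz ?eqxx // big1 // => g /andP[_ gd].
    by rewrite eq_sym (negbTE gd).
  rewrite big1 // => g /andP[_ /eqP gz]; case: eqP => // dg.
  by rewrite -gz dg eqxx in dz.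
rewrite (eq_bigr (fun g => if g == 1 then k else lam)) => [|g /andP[gG _]]; last first.
  exact: card_diff_pairs.
have fiberU : #|[pred g in G | coset U g == z]| = #|U|.
  by rewrite -(card_coset_fiber zGU); apply: eq_card => g; rewrite inE.
move: fiberU; have [-> | z1] := eqVneq z 1 => fiberU.
  rewrite (bigD1 1) ?group1 ?morph1 //= eqxx; congr (_ + _)%N.
  rewrite (eq_bigr (fun _ => lam)) => [|g /andP[_ /negbTE->] //].
  rewrite sum_nat_const mulnC; congr (_ * _)%N.
  rewrite -fiberU (cardD1 1 [pred g in G | coset U g == 1]) !inE group1 morph1 eqxx.
  by apply: eq_card => g; rewrite !inE andbC.
rewrite (eq_bigr (fun _ => lam)) => [|g /andP[_ /eqP gz]]; last first.
  by case: eqP => // g1; rewrite -gz g1 morph1 eqxx in z1.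
by rewrite sum_nat_const fiberU mulnC.
Qed.

End DifferenceSetContraction.

Section DifferenceSetPattern.

Variables (gT : finGroupType) (G : {group gT}) (D : {set gT}) (p e : nat).
Let q := (p ^ e)%N.
Hypotheses (p_pr : prime p) (e_gt0 : (0 < e)%N) (abG : abelian G).
Hypothesis dsD :
  difference_set G D ((q + 1) * (q ^ 2 + 1)) (q ^ 2 + q + 1) (q + 1).

Section Contraction.

Variables (U : {group gT}) (t : nat).
Hypotheses (sUG : U \subset G) (expU : {in G, forall g, g ^+ (q + 1) \in U}).
Hypothesis index_t : (t * #|G : U| = (q + 1) ^ 2)%N.

Let nsUG : U <| G. Proof. by rewrite -sub_abelian_normal. Qed.
Local Notation a := (@coset_count _ U D).

Lemma coset_count_pattern :
  exists2 x, x \in G / U & {in G / U, forall c, (a c + q * (c == x) = t)%N}.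
Proof.
case: dsD => cardG _ cardD _; set m := #|G : U|.
have card_quo : #|G / U| = m by rewrite card_quotient ?normal_norm.
have m_gt0 : (0 < m)%N by rewrite -card_quo cardG_gt0.
have U_gt0 : (0 < #|U|)%N := cardG_gt0 U.
have Ug_m : (#|U| * m = (q + 1) * (q ^ 2 + 1))%N by rewrite Lagrange.
have key : ((q + 1) * #|U| + t * t * m = 2 * t * (q ^ 2 + q + 1))%N.
  apply/eqP; rewrite -(eqn_pmul2r m_gt0); apply/eqP; nia.
pose f c : int := (Posz (a c) - Posz t)%R.
have expH : {in G / U, forall c, c ^+ (p ^ e).+1 = 1}.
  move=> _ /morphimP[g gN gG ->].
  by rewrite -morphX //= coset_id // -addn1 expU.
have autocorr_f : {in G / U, forall z,
    autocorr (G / U) f z = if z == 1 then Posz (p ^ (2 * e)) else 0%R}.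
  move=> z zGU.
  have shift : (\sum_(c in G / U) a (z^-1 * c))%N = (\sum_(c in G / U) a c)%N.
    rewrite [RHS](reindex_inj (mulgI z^-1)) /=; apply: eq_bigl => c.
    by rewrite groupMl ?groupV.
  pose sum_pos := (\sum_(c in G / U) (a c * a (z^-1 * c) + t * t))%N.
  pose sum_neg := (\sum_(c in G / U) (t * a c + t * a (z^-1 * c)))%N.
  have -> : autocorr (G / U) f z = (Posz sum_pos - Posz sum_neg)%R.
    rewrite /autocorr /sum_pos /sum_neg !(big_morph Posz PoszD (erefl (Posz 0))) -sumrB.
    by apply: eq_bigr => c _; rewrite /f !PoszD !PoszM; ring.
  rewrite /sum_pos /sum_neg !big_split /= sum_nat_const -!big_distrr /= shift.
  rewrite (sum_coset_count U dsD) (coset_count_autocorr nsUG dsD) // card_quo cardD.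
  have q2 : (p ^ (2 * e) = q ^ 2)%N by rewrite mulnC expnM.
  by case: eqP => _; rewrite ?q2; apply/eqP; rewrite subr_eq -PoszD eqz_nat; nia.
have abGU := quotient_abelian U abG.
have [x xGU [f0 _]] := autocorr_delta_support p_pr e_gt0 abGU expH autocorr_f.
have sum_f : (\sum_(c in (G / U)%g) f c)%R = f x.
  by rewrite (bigD1 x) //= big1 ?addr0 // => c /andP[cGU cx]; apply: f0.
have fx : f x = (- Posz q)%R.
  rewrite -sum_f /f sumrB -(big_morph Posz PoszD (erefl (Posz 0))).
  rewrite (sum_coset_count U dsD) sumr_const card_quo cardD.
  have -> : (Posz t *+ m)%R = Posz (t * m) by rewrite PoszM -mulr_natr natz.
  by rewrite index_t; apply/eqP; rewrite subr_eq; apply/eqP; lia.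
exists x => // c cGU; have [-> | cx] := eqVneq c x.
  by move: fx; rewrite /f muln1 => /eqP; rewrite subr_eq; lia.
by move: (f0 c cGU cx); rewrite /f muln0 addn0 => /eqP; rewrite subr_eq0; lia.
Qed.

End Contraction.

Let q_gt1 : (1 < q)%N. Proof. by rewrite -(expn0 p) ltn_exp2l ?prime_gt1. Qed.

Let indexg_sqr1 (K : {group gT}) :
  K \subset G -> #|K| = (q ^ 2 + 1)%N -> #|G : K| = (q + 1)%N.
Proof.
case: dsD => cardG _ _ _ sKG cardK; apply/eqP.
by rewrite -(eqn_pmul2l (cardG_gt0 K)) Lagrange // cardK cardG mulnC.
Qed.

Lemma subgroup_sqr1_unique (K H : {group gT}) :
    K \subset G -> H \subset G -> #|K| = (q ^ 2 + 1)%N -> #|H| = (q ^ 2 + 1)%N ->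
  H = K.
Proof.
move=> sKG sHG cardK cardH; set U := (K :&: H)%G; set w := #|K : U|.
have sUK : U \subset K := subsetIl K H.
have w_dvd : w %| q + 1.
  have cKH : commute K H by apply/normC/(subset_trans sKG)/sub_abelian_norm.
  have : #|K <*> H| %| #|G| by rewrite cardSg // join_subG sKG.
  rewrite comm_joingE // -(dvdn_pmul2r (cardG_gt0 U)) -mul_cardG -(Lagrange sUK).
  rewrite -/w -(Lagrange sHG) indexg_sqr1 // cardH [(_ * #|U|)%N]mulnC -mulnA.
  by rewrite dvdn_pmul2l ?cardG_gt0 // [X in _ %| X]mulnC dvdn_pmul2r ?addn1.
have [w1 | w_ne1] := eqVneq w 1%N.
  apply/val_inj/eqP; rewrite eq_sym eqEcard cardH cardK leqnn andbT.
  by move/eqP: w1; rewrite indexg_eq1 subsetI => /andP[].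
set t := ((q + 1) %/ w)%N.
have t_w : (t * w = q + 1)%N by rewrite divnK.
have sUG : U \subset G := subset_trans sUK sKG.
have expU : {in G, forall g, g ^+ (q + 1) \in U}.
  move=> g gG; rewrite inE -{1}(indexg_sqr1 sKG cardK) -(indexg_sqr1 sHG cardH).
  by rewrite !abelian_expg_indexg.
have index_t : (t * #|G : U| = (q + 1) ^ 2)%N.
  by rewrite -(Lagrange_index sKG sUK) indexg_sqr1 // mulnCA t_w.
have [x xGU /(_ x xGU)] := coset_count_pattern sUG expU index_t.
have w_gt0 : (0 < w)%N := indexg_gt0 K U.
by rewrite eqxx muln1; nia.
Qed.

Lemma rcoset_meet_pattern (K : {group gT}) :
    K \subset G -> #|K| = (q ^ 2 + 1)%N ->
  exists2 x, x \in G & #|D :&: K :* x| = 1%N /\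
    {in G, forall y, K :* y != K :* x -> #|D :&: K :* y| = (q + 1)%N}.
Proof.
move=> sKG cardK; have nsKG : K <| G by rewrite -sub_abelian_normal.
have nKG := normal_norm nsKG.
have expK : {in G, forall g, g ^+ (q + 1) \in K}.
  by rewrite -(indexg_sqr1 sKG cardK); apply: abelian_expg_indexg.
have index_t : ((q + 1) * #|G : K| = (q + 1) ^ 2)%N by rewrite indexg_sqr1.
have [_ /morphimP[x xN xG ->] pattern] := coset_count_pattern sKG expK index_t.
have meetE y : y \in G -> #|D :&: K :* y| = coset_count D (coset K y).
  move=> yG; apply: (card_meet_rcoset nsKG dsD yG).
exists x => //; split=> [|y yG Kyx].
  by have := pattern _ (mem_quotient K xG); rewrite meetE // eqxx muln1; lia.
have := pattern _ (mem_quotient K yG); rewrite meetE // addnC.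
suff /negbTE-> : coset K y != coset K x by rewrite muln0.
by apply: contra Kyx => /eqP yx; rewrite -!val_coset ?(subsetP nKG) // yx.
Qed.

End DifferenceSetPattern.

Theorem theorem5p1 (q : nat) (gT : finGroupType) (G : {group gT}) (D : {set gT}) :
  prime_power q -> abelian G ->
  #|G| = ((q + 1) * (q ^ 2 + 1))%N ->
  difference_set G D ((q + 1) * (q ^ 2 + 1)) (q ^ 2 + q + 1) (q + 1) ->
  normalized D ->
  exists K : {group gT},
    [/\ K \subset G, #|K| = (q ^ 2 + 1)%N,
        (forall H : {group gT}, H \subset G -> #|H| = (q ^ 2 + 1)%N -> H = K) &
        exists2 x, x \in G &
          #|D :&: K :* x| = 1%N /\
          (forall y, y \in G -> K :* y != K :* x -> #|D :&: K :* y| = (q + 1)%N)].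
Proof.
move=> [p [e [p_pr [e_gt0 ->]]]] abG cardG dsD _.
have [K [sKG cardK]] : exists K : {group gT}, K \subset G /\ #|K| = ((p ^ e) ^ 2 + 1)%N.
  by apply: abelian_exists_subgroup_of_order; rewrite // cardG dvdn_mull.
exists K; split=> //.
  by move=> H sHG cardH; apply: (subgroup_sqr1_unique p_pr e_gt0 abG dsD).
by have [x xG meet] := rcoset_meet_pattern p_pr e_gt0 abG dsD sKG cardK; exists x.
Qed.
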